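(* (i) Let $\Delta(\Phi_{23},\Phi_{13},\Phi_{12})$ and $\Delta(\Phi_1,\Phi_2,\Phi_3)$ be reciprocal triangles (in the sense of the context) with interior points $\Phi$ and $\Phi_{123}$ respectively, and let $a,b,c,a_1,b_2,c_3\in\mathbb{R}$ be the dilations defined by $$\Phi_{12}-\Phi=c(\Phi_1-\Phi_2),\quad \Phi_{23}-\Phi=a(\Phi_2-\Phi_3),\quad \Phi_{13}-\Phi=b(\Phi_3-\Phi_1),$$ $$\Phi_{123}-\Phi_3=c_3(\Phi_{13}-\Phi_{23}),\quad \Phi_{123}-\Phi_1=a_1(\Phi_{12}-\Phi_{13}),\quad \Phi_{123}-\Phi_2=b_2(\Phi_{23}-\Phi_{12}).$$ Then $$a_1=-\frac{a}{ab+bc+ca},\qquad b_2=-\frac{b}{ab+bc+ca},\qquad c_3=-\frac{c}{ab+bc+ca}.$$ (ii) Conversely, let $\Phi_1,\Phi_2,\Phi_3,\Phi$ be four generic points of $\mathbb{C}$, let $a,b,c\in\mathbb{R}$ be arbitrary non-vanishing real numbers and define $a_1,b_2,c_3$ by the three formulas above. Then the linear system consisting of the six equations above, in the unknowns $\Phi_{12},\Phi_{23},\Phi_{13},\Phi_{123}$, is compatible and its unique solution gives reciprocal triangles $\Delta(\Phi_{23},\Phi_{13},\Phi_{12})$ and $\Delta(\Phi_1,\Phi_2,\Phi_3)$ with interior points $\Phi$ and $\Phi_{123}$ respectively.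
   Context: The plane is identified with $\mathbb{C}$. Reciprocal triangles: let $\Delta(\Phi_{23},\Phi_{13},\Phi_{12})$ be a non-degenerate triangle and $\Phi$ an additional point; let $\Delta(\Phi_1,\Phi_2,\Phi_3)$ be a non-degenerate triangle whose edges $(\Phi_1,\Phi_2)$, $(\Phi_2,\Phi_3)$, $(\Phi_3,\Phi_1)$ are parallel to the segments $(\Phi,\Phi_{12})$, $(\Phi,\Phi_{23})$, $(\Phi,\Phi_{13})$ respectively. The two triangles are called reciprocal (with interior points $\Phi$ and $\Phi_{123}$) if there is a point $\Phi_{123}$ such that the segments $(\Phi_1,\Phi_{123})$, $(\Phi_2,\Phi_{123})$, $(\Phi_3,\Phi_{123})$ are parallel to the edges $(\Phi_{13},\Phi_{12})$, $(\Phi_{12},\Phi_{23})$, $(\Phi_{23},\Phi_{13})$ respectively. Parallelism of segments is expressed by real (dilation) factors as in the displayed equations. *)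

From HB Require Import structures.
From mathcomp Require Import all_boot all_order all_algebra.
From mathcomp Require Export complex.
Set Implicit Arguments. Unset Strict Implicit. Unset Printing Implicit Defensive.
Import Order.TTheory GRing.Theory Num.Theory.
Local Open Scope ring_scope.
Local Open Scope complex_scope.

(* Three points p q r of the plane are collinear iff the cross product of
   q - p and r - p vanishes, i.e. Im((q - p) * conj(r - p)) = 0. *)
Definition collinear (R : rcfType) (p q r : R[i]) : Prop :=
  Im ((q - p) * (r - p)^*) = 0.

Definition nondeg_triangle (R : rcfType) (p q r : R[i]) : Prop :=
  ~ collinear p q r.

Definition dilation_eqs (R : rcfType)
    (P1 P2 P3 P P12 P23 P13 P123 : R[i]) (a b c a1 b2 c3 : R) : Prop :=
  [/\ P12 - P = c%:C * (P1 - P2),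
      P23 - P = a%:C * (P2 - P3)
    & P13 - P = b%:C * (P3 - P1)] /\
  [/\ P123 - P3 = c3%:C * (P13 - P23),
      P123 - P1 = a1%:C * (P12 - P13)
    & P123 - P2 = b2%:C * (P23 - P12)].

Definition reciprocal (R : rcfType)
    (P23 P13 P12 P P1 P2 P3 P123 : R[i]) : Prop :=
  [/\ nondeg_triangle P23 P13 P12,
      nondeg_triangle P1 P2 P3 &
      (exists a b c a1 b2 c3 : R,
        dilation_eqs P1 P2 P3 P P12 P23 P13 P123 a b c a1 b2 c3)].

(* The first three equations determine P12, P23, P13 from P, and the fourth
   one then determines P123.  Writing u = P2 - P3 and v = P3 - P1, the two
   remaining equations become real linear combinations of u and v that must
   vanish; since the triangle Delta(P1, P2, P3) is non-degenerate, u and v are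
   linearly independent over R, so this amounts to four real equations in
   a1, b2, c3, whose unique solution is a1 = -a/S, b2 = -b/S, c3 = -c/S with
   S = ab + bc + ca.  Conversely, the triangle Delta(P23, P13, P12) has
   S times the oriented area of Delta(P1, P2, P3), hence is non-degenerate
   when S != 0. *)
From HB Require Import structures.
From mathcomp Require Import all_boot all_order all_algebra.
From mathcomp Require Import complex ring.
Set Implicit Arguments. Unset Strict Implicit. Unset Printing Implicit Defensive.
Import Order.TTheory GRing.Theory Num.Theory.
Local Open Scope ring_scope.
Local Open Scope complex_scope.

Definition reciprocal_dilations (F : fieldType) (a b c a1 b2 c3 : F) : Prop :=
  [/\ a1 * c - c3 * a = 0, a1 * (b + c) + c3 * b + 1 = 0,
      b2 * (a + c) + c3 * a + 1 = 0 & b2 * c - c3 * b = 0].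

Lemma reciprocal_dilationsE (F : fieldType) (a b c a1 b2 c3 : F) :
  let S := a * b + b * c + c * a in
  reciprocal_dilations a b c a1 b2 c3 <->
  S != 0 /\ [/\ a1 = - (a / S), b2 = - (b / S) & c3 = - (c / S)].
Proof.
move=> S; split; last first.
  by case=> S_neq0 [-> -> ->]; split; rewrite /S; field.
case=> e1 e2 e3 e4.
have a1S : a1 * S = - a.
  apply/eqP; rewrite -addr_eq0; apply/eqP.
  have -> : a1 * S + a = a * (a1 * (b + c) + c3 * b + 1) + b * (a1 * c - c3 * a).
    by rewrite /S; ring.
  by rewrite e1 e2 !mulr0 addr0.
have b2S : b2 * S = - b.
  apply/eqP; rewrite -addr_eq0; apply/eqP.
  have -> : b2 * S + b = b * (b2 * (a + c) + c3 * a + 1) + a * (b2 * c - c3 * b).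
    by rewrite /S; ring.
  by rewrite e3 e4 !mulr0 addr0.
have c3S : c3 * S = - c.
  apply/eqP; rewrite -addr_eq0; apply/eqP.
  have -> : c3 * S + c = c * (a1 * (b + c) + c3 * b + 1) - (b + c) * (a1 * c - c3 * a).
    by rewrite /S; ring.
  by rewrite e1 e2 !mulr0 subr0.
have S_neq0 : S != 0.
  apply/eqP => S0.
  have b0 : b = 0 by apply/eqP; rewrite -oppr_eq0 -b2S S0 mulr0.
  have c0 : c = 0 by apply/eqP; rewrite -oppr_eq0 -c3S S0 mulr0.
  by move/eqP: e2; rewrite b0 c0 !(addr0, mulr0, add0r) oner_eq0.
by split=> //; split; rewrite -mulNr -?a1S -?b2S -?c3S mulfK.
Qed.

Lemma nondeg_triangleE (R : rcfType) (p q r : R[i]) :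
  nondeg_triangle p q r <-> complex.Im ((q - r) * (r - p)^*) != 0.
Proof.
have -> : complex.Im ((q - r) * (r - p)^*) = complex.Im ((q - p) * (r - p)^*).
  by case: p q r => [x1 y1] [x2 y2] [x3 y3]; simpc; rewrite /=; ring.
rewrite /nondeg_triangle /collinear -complexIm.
by split=> [nd | /eqP Im_neq0 [Im0]]; [apply/eqP => Im0; apply: nd; rewrite Im0 |].
Qed.

Lemma real_combination_eq0 (R : rcfType) (u v : R[i]) (al be : R) :
  complex.Im (u * v^*) != 0 -> al%:C * u + be%:C * v = 0 -> al = 0 /\ be = 0.
Proof.
case: u v => [x1 y1] [x2 y2]; simpc => /= uv_neq0 /eqP.
rewrite eq_complex /= => /andP [/eqP re0 /eqP im0].
have al_uv : al * (- (x1 * y2) + y1 * x2)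
    = x2 * (al * y1 + be * y2) - y2 * (al * x1 + be * x2) by ring.
have be_uv : be * (- (x1 * y2) + y1 * x2)
    = y1 * (al * x1 + be * x2) - x1 * (al * y1 + be * y2) by ring.
rewrite re0 im0 !mulr0 subrr in al_uv be_uv.
move/eqP: al_uv; move/eqP: be_uv.
by rewrite !mulf_eq0 (negbTE uv_neq0) !orbF => /eqP ? /eqP.
Qed.

Lemma Im_dilated_triangle (R : rcfType) (P1 P2 P3 P : R[i]) (a b c : R) :
  let P12 := P + c%:C * (P1 - P2) in
  let P23 := P + a%:C * (P2 - P3) in
  let P13 := P + b%:C * (P3 - P1) in
  complex.Im ((P13 - P12) * (P12 - P23)^*)
  = (a * b + b * c + c * a) * complex.Im ((P2 - P3) * (P3 - P1)^*).
Proof.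
case: P1 P2 P3 P => [x1 y1] [x2 y2] [x3 y3] [x y] /=.
by rewrite /real_complex_def; simpc; rewrite /=; ring.
Qed.

Definition dilated_points (R : rcfType) (P1 P2 P3 P : R[i]) (a b c c3 : R) :
    R[i] * R[i] * R[i] * R[i] :=
  let P12 := P + c%:C * (P1 - P2) in
  let P23 := P + a%:C * (P2 - P3) in
  let P13 := P + b%:C * (P3 - P1) in
  (P12, P23, P13, P3 + c3%:C * (P13 - P23)).

Lemma dilation_eqsE (R : rcfType) (P1 P2 P3 P P12 P23 P13 P123 : R[i])
    (a b c a1 b2 c3 : R) :
  dilation_eqs P1 P2 P3 P P12 P23 P13 P123 a b c a1 b2 c3 <->
  [/\ (P12, P23, P13, P123) = dilated_points P1 P2 P3 P a b c c3,
      (a1 * c - c3 * a)%:C * (P2 - P3)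
        + (a1 * (b + c) + c3 * b + 1)%:C * (P3 - P1) = 0
    & (b2 * (a + c) + c3 * a + 1)%:C * (P2 - P3)
        + (b2 * c - c3 * b)%:C * (P3 - P1) = 0].
Proof.
have residual1 : P3 + c3%:C * (P + b%:C * (P3 - P1) - (P + a%:C * (P2 - P3))) - P1
    - a1%:C * (P + c%:C * (P1 - P2) - (P + b%:C * (P3 - P1)))
  = (a1 * c - c3 * a)%:C * (P2 - P3) + (a1 * (b + c) + c3 * b + 1)%:C * (P3 - P1).
  by rewrite !(rmorphD, rmorphM, rmorphB, rmorph1) /=; ring.
have residual2 : P3 + c3%:C * (P + b%:C * (P3 - P1) - (P + a%:C * (P2 - P3))) - P2
    - b2%:C * (P + a%:C * (P2 - P3) - (P + c%:C * (P1 - P2)))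
  = - ((b2 * (a + c) + c3 * a + 1)%:C * (P2 - P3)
        + (b2 * c - c3 * b)%:C * (P3 - P1)).
  by rewrite !(rmorphD, rmorphM, rmorphB, rmorph1) /=; ring.
split.
  case=> [[e12 e23 e13] [e123 e1 e2]].
  have {}e12 : P12 = P + c%:C * (P1 - P2) by rewrite -e12 subrKC.
  have {}e23 : P23 = P + a%:C * (P2 - P3) by rewrite -e23 subrKC.
  have {}e13 : P13 = P + b%:C * (P3 - P1) by rewrite -e13 subrKC.
  have {}e123 : P123 = P3 + c3%:C * (P13 - P23) by rewrite -e123 subrKC.
  subst P12 P23 P13 P123; split=> //.
    by rewrite -residual1 e1 subrr.
  by apply/eqP; rewrite -oppr_eq0 -residual2 e2 subrr.
case=> [[-> -> -> ->] /eqP r1 /eqP r2].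
split; first by split; rewrite addrC addKr.
split; first by rewrite addrC addKr.
  by apply/eqP; rewrite -subr_eq0 residual1.
by apply/eqP; rewrite -subr_eq0 residual2 oppr_eq0.
Qed.

Lemma dilation_eqs_dilated_points (R : rcfType)
    (P1 P2 P3 P P12 P23 P13 P123 : R[i]) (a b c a1 b2 c3 : R) :
  nondeg_triangle P1 P2 P3 ->
  dilation_eqs P1 P2 P3 P P12 P23 P13 P123 a b c a1 b2 c3 <->
  (P12, P23, P13, P123) = dilated_points P1 P2 P3 P a b c c3
  /\ reciprocal_dilations a b c a1 b2 c3.
Proof.
move/nondeg_triangleE => uv_neq0; rewrite dilation_eqsE; split.
  case=> def_pts /(real_combination_eq0 uv_neq0) [e1 e2].
  by case/(real_combination_eq0 uv_neq0) => e3 e4.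
by case=> def_pts [-> -> -> ->]; split; rewrite // rmorph0 !mul0r addr0.
Qed.

Theorem theorem1 (R : rcfType) :
  (* (i) *)
  (forall (P1 P2 P3 P P12 P23 P13 P123 : R[i]) (a b c a1 b2 c3 : R),
     reciprocal P23 P13 P12 P P1 P2 P3 P123 ->
     dilation_eqs P1 P2 P3 P P12 P23 P13 P123 a b c a1 b2 c3 ->
     [/\ a1 = - (a / (a * b + b * c + c * a)),
         b2 = - (b / (a * b + b * c + c * a))
       & c3 = - (c / (a * b + b * c + c * a))])
  /\
  (* (ii) *)
  (forall (P1 P2 P3 P : R[i]) (a b c : R),
     nondeg_triangle P1 P2 P3 ->
     a != 0 -> b != 0 -> c != 0 ->
     a * b + b * c + c * a != 0 ->
     let S := a * b + b * c + c * a in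
     let a1 := - (a / S) in
     let b2 := - (b / S) in
     let c3 := - (c / S) in
     exists X : R[i] * R[i] * R[i] * R[i],
       let: (P12, P23, P13, P123) := X in
       [/\ dilation_eqs P1 P2 P3 P P12 P23 P13 P123 a b c a1 b2 c3,
           reciprocal P23 P13 P12 P P1 P2 P3 P123
         & forall Q12 Q23 Q13 Q123 : R[i],
             dilation_eqs P1 P2 P3 P Q12 Q23 Q13 Q123 a b c a1 b2 c3 ->
             (Q12, Q23, Q13, Q123) = X]).
Proof.
split.
  move=> P1 P2 P3 P P12 P23 P13 P123 a b c a1 b2 c3 [_ nd _] eqs.
  have [_ rd] := (dilation_eqs_dilated_points P P12 P23 P13 P123 a b c a1 b2 c3 nd).1 eqs.
  by case/reciprocal_dilationsE: rd.
move=> P1 P2 P3 P a b c nd _ _ _ S_neq0 S a1 b2 c3.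
have rd : reciprocal_dilations a b c a1 b2 c3 by apply/reciprocal_dilationsE.
have eqsP Q12 Q23 Q13 Q123 :=
  dilation_eqs_dilated_points P Q12 Q23 Q13 Q123 a b c a1 b2 c3 nd.
exists (dilated_points P1 P2 P3 P a b c c3).
case def_pts: dilated_points => [[[P12 P23] P13] P123].
have eqs : dilation_eqs P1 P2 P3 P P12 P23 P13 P123 a b c a1 b2 c3.
  by apply/eqsP; rewrite def_pts; split.
split=> //; last by move=> Q12 Q23 Q13 Q123 /eqsP [-> _].
split=> //; last by exists a, b, c, a1, b2, c3.
apply/nondeg_triangleE; case: def_pts => <- <- <- _.
by rewrite Im_dilated_triangle mulf_neq0 //; apply/nondeg_triangleE.
Qed.
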